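(* Let $P$ satisfy (S1)–(S4). Let $h_1,h_2,h_3\in P\setminus\{1\}$ and let $\bar h=(h_1)_1(h_2)_2(h_3)_3\in H$ be the element with $h_j$ at coordinate $j$ ($j=1,2,3$) and $1$ elsewhere. Then $\bar h$ is a $[\pm,t]$-commutator if and only if $\Xi(h_1,h_2,h_3)$ holds in $P$.
   Context: Conditions (S1)–(S4) on a finite group $P$: (S1) for all $a_1,a_2\in P$ there are $x,y$ with $a_2=x^{-1}a_1^{-1}yxy^{-1}$; (S2) for all $a_1,a_2,a_3$ there are $u,v$ with $a_2=a_3ua_1^{-1}a_3^{-1}vu^{-1}v^{-1}$; (S3) for all $u_1,u_2,u_3,u_4\ne1$ there are $x,y,z$ with $u_4=x^{-1}u_1xy^{-1}u_2yz^{-1}u_3z$; (S4) there are $u_1,u_2,u_3\ne1$ with $\Xi(u_1,u_2,u_3)$ false. Here $\Xi(u_1,u_2,u_3)$ means: $\exists x,y\in P\ (u_3=x^{-1}u_2^{-1}xy^{-1}u_1^{-1}y)$. $H=\bigoplus_{i\in\mathbb Z}H_i$, each $H_i$ a copy of $P$, elements finitely supported sequences $(h_i)_{i\in\mathbb Z}$; $(h)_j$ denotes the element with $h$ at coordinate $j$ and $1$ elsewhere. $\alpha((h_i)_i)=(h_{i+1})_i$. $\bar h\in H$ is a $[\pm,t]$-commutator if $\bar h=\bar g_1\alpha(\bar g_1^{-1})\alpha(\bar g_2)\bar g_2^{-1}$ or $\bar h=\alpha(\bar g_1)\bar g_1^{-1}\bar g_2\alpha(\bar g_2^{-1})$ for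 some $\bar g_1,\bar g_2\in H$. *)

(* P is modelled as a finGroupType gT (P = the whole type). *)
From mathcomp Require Import all_boot all_algebra all_fingroup.
Set Implicit Arguments. Unset Strict Implicit. Unset Printing Implicit Defensive.
Import GRing.Theory.

Local Open Scope group_scope.

Section Defs.
Variable gT : finGroupType.

Definition Xi (u1 u2 u3 : gT) : Prop :=
  exists x y : gT, u3 = x^-1 * u2^-1 * x * y^-1 * u1^-1 * y.

Definition S1 : Prop :=
  forall a1 a2 : gT, exists x y : gT, a2 = x^-1 * a1^-1 * y * x * y^-1.

Definition S2 : Prop :=
  forall a1 a2 a3 : gT, exists u v : gT,
    a2 = a3 * u * a1^-1 * a3^-1 * v * u^-1 * v^-1.

Definition S3 : Prop :=
  forall u1 u2 u3 u4 : gT, u1 != 1 -> u2 != 1 -> u3 != 1 -> u4 != 1 ->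
    exists x y z : gT, u4 = x^-1 * u1 * x * y^-1 * u2 * y * z^-1 * u3 * z.

Definition S4 : Prop :=
  exists u1 u2 u3 : gT, [/\ u1 != 1, u2 != 1, u3 != 1 & ~ Xi u1 u2 u3].

(* H = direct sum over Z of copies of P: finitely supported maps int -> gT *)
Definition fin_supp (g : int -> gT) : Prop :=
  exists N : nat, forall i : int, (N < absz i)%N -> g i = 1.

Definition Hmul (g1 g2 : int -> gT) : int -> gT := fun i => g1 i * g2 i.
Definition Hinv (g : int -> gT) : int -> gT := fun i => (g i)^-1.
Definition alpha (g : int -> gT) : int -> gT := fun i => g (i + 1)%R.

Definition pm_t_commutator (h : int -> gT) : Prop :=
  exists g1 g2 : int -> gT, fin_supp g1 /\ fin_supp g2 /\
   ((forall i, h i = Hmul (Hmul (Hmul g1 (alpha (Hinv g1))) (alpha g2)) (Hinv g2) i)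
    \/
    (forall i, h i = Hmul (Hmul (Hmul (alpha g1) (Hinv g1)) g2) (alpha (Hinv g2)) i)).

Definition hbar3 (h1 h2 h3 : gT) : int -> gT :=
  fun i => if i == 1%R then h1 else if i == 2%R then h2
           else if i == 3%R then h3 else 1.
End Defs.

(** Put d := g1^-1 g2 (coordinatewise).  Then h = g1 alpha(g1^-1) alpha(g2) g2^-1
    has coordinates h_i = (d_(i+1) d_i^-1)^(g1_i^-1), and the second kind of
    [+-,t]-commutator has the same shape after replacing d by g2^-1 g1 and
    adjusting the conjugators.  If h is supported in {1,2,3}, then d_(i+1) = d_i
    for every other i, so the finitely supported d vanishes at 1 and at 4 and
    h_1, h_2, h_3 are conjugates of d_2, d_3 d_2^-1 and d_3^-1; eliminating
    d_2, d_3 gives exactly Xi(h_1, h_2, h_3).  Conversely, a solution x, y of Xi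
    yields g1, g2 supported on {2, 3}. *)

From mathcomp Require Import all_boot all_algebra all_fingroup zify.
Local Open Scope group_scope.

Ltac group_simpl := repeat rewrite ?invgM ?invgK ?invg1 ?mulgA ?mulgV ?mulVg
  ?mulg1 ?mul1g ?mulgK ?mulgVK.

Section FinSupp.
Variable gT : finGroupType.
Implicit Types g d : int -> gT.

Lemma fin_supp_mul g1 g2 : fin_supp g1 -> fin_supp g2 -> fin_supp (Hmul g1 g2).
Proof.
move=> [N1 g1N1] [N2 g2N2]; exists (N1 + N2)%N => i Ni.
by rewrite /Hmul g1N1 ?g2N2 ?mulg1 //; lia.
Qed.

Lemma fin_supp_inv g : fin_supp g -> fin_supp (Hinv g).
Proof. by move=> [N gN]; exists N => i Ni; rewrite /Hinv gN ?invg1. Qed.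

Lemma fin_supp_hbar3 (u1 u2 u3 : gT) : fin_supp (hbar3 u1 u2 u3).
Proof.
exists 3%N => i Ni; rewrite /hbar3.
by do 3!(case: eqP => [?|_]; first lia).
Qed.

Lemma fin_supp_flat_left d (m : int) : fin_supp d ->
  (forall i : int, (i < m)%R -> d (i + 1)%R = d i) -> d m = 1.
Proof.
move=> [N dN] flat_d.
have d_sub n : d (m - n%:Z)%R = d m.
  elim: n => [|n IHn]; first by rewrite GRing.subr0.
  by rewrite -IHn -[in RHS](_ : (m - n.+1%:Z + 1 = m - n%:Z)%R) ?flat_d //; lia.
by rewrite -(d_sub (N + absz m).+1) dN //; lia.
Qed.

Lemma fin_supp_flat_right d (m : int) : fin_supp d ->
  (forall i : int, (m <= i)%R -> d (i + 1)%R = d i) -> d m = 1.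
Proof.
move=> [N dN] flat_d.
have d_add n : d (m + n%:Z)%R = d m.
  elim: n => [|n IHn]; first by rewrite GRing.addr0.
  by rewrite -IHn -(_ : (m + n%:Z + 1 = m + n.+1%:Z)%R) ?flat_d //; lia.
by rewrite -(d_add (N + absz m).+1) dN //; lia.
Qed.

End FinSupp.

Definition conj_coboundary {gT : finGroupType} (h : int -> gT) : Prop :=
  exists c d : int -> gT, fin_supp d /\
    forall i, h i = (d (i + 1)%R * (d i)^-1) ^ c i.

Section Commutators.
Variable gT : finGroupType.

Lemma XiE (u1 u2 u3 : gT) :
  Xi u1 u2 u3 <-> exists x y : gT, u3 = (u2^-1) ^ x * (u1^-1) ^ y.
Proof.
by split=> -[x [y ->]]; exists x, y; rewrite /conjg; group_simpl.
Qed.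

Lemma pm_t_commutator_conj_coboundary (h : int -> gT) :
  pm_t_commutator h -> conj_coboundary h.
Proof.
move=> [g1 [g2 [fin_g1 [fin_g2 [h_eq | h_eq]]]]].
- exists (Hinv g1), (Hmul (Hinv g1) g2); split.
    by apply: fin_supp_mul => //; apply: fin_supp_inv.
  by move=> i; rewrite h_eq /Hmul /Hinv /alpha /conjg; group_simpl.
- exists (fun i => (g2 i)^-1 * g1 i * (g1 (i + 1)%R)^-1), (Hmul (Hinv g2) g1).
  split; first by apply: fin_supp_mul => //; apply: fin_supp_inv.
  by move=> i; rewrite h_eq /Hmul /Hinv /alpha /conjg; group_simpl.
Qed.

Lemma conj_coboundary_hbar3_Xi (h1 h2 h3 : gT) :
  conj_coboundary (hbar3 h1 h2 h3) -> Xi h1 h2 h3.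
Proof.
move=> [c [d [fin_d h_eq]]].
have flat_d i : i != 1%R -> i != 2%R -> i != 3%R -> d (i + 1)%R = d i.
  move=> i1 i2 i3; apply/eqP; rewrite -divg_eq1 -(conjg_eq1 _ (c i)) -h_eq.
  by rewrite /hbar3 (negbTE i1) (negbTE i2) (negbTE i3).
have d1 : d 1%R = 1.
  by apply: fin_supp_flat_left fin_d _ => i i_lt; apply: flat_d; apply/eqP; lia.
have d4 : d 4%R = 1.
  by apply: fin_supp_flat_right fin_d _ => i i_ge; apply: flat_d; apply/eqP; lia.
have e1 := h_eq 1%R; have e2 := h_eq 2%R; have e3 := h_eq 3%R.
rewrite /hbar3 /= d1 in e1; rewrite /hbar3 /= in e2; rewrite /hbar3 /= d4 in e3.
apply/XiE; exists ((c 2%R)^-1 * d 2%R * c 3%R), ((c 1%R)^-1 * d 2%R * c 3%R).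
by rewrite e1 e2 e3 /conjg; group_simpl.
Qed.

Lemma Xi_pm_t_commutator_hbar3 (h1 h2 h3 : gT) :
  Xi h1 h2 h3 -> pm_t_commutator (hbar3 h1 h2 h3).
Proof.
move=> [x [y h3_eq]].
exists (hbar3 1 y x), (hbar3 1 (h1^-1 * y) (x * h3)).
split; [exact: fin_supp_hbar3 | split; [exact: fin_supp_hbar3 | right => i]].
rewrite /Hmul /Hinv /alpha.
have [-> | i0] := eqVneq i 0%R; first by rewrite /hbar3 /=; group_simpl.
have [-> | i1] := eqVneq i 1%R; first by rewrite /hbar3 /=; group_simpl.
have [-> | i2] := eqVneq i 2%R; first by rewrite /hbar3 /= h3_eq; group_simpl.
have [-> | i3] := eqVneq i 3%R; first by rewrite /hbar3 /=; group_simpl.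
rewrite /hbar3 (negbTE i1) (negbTE i2) (negbTE i3).
by do 3!(case: eqP => [?|_]; first lia); group_simpl.
Qed.

End Commutators.

Theorem lemma4p5 (gT : finGroupType) :
  S1 gT -> S2 gT -> S3 gT -> S4 gT ->
  forall h1 h2 h3 : gT, h1 != 1 -> h2 != 1 -> h3 != 1 ->
  (pm_t_commutator (hbar3 h1 h2 h3) <-> Xi h1 h2 h3).
Proof.
move=> _ _ _ _ h1 h2 h3 _ _ _; split.
- by move/pm_t_commutator_conj_coboundary/conj_coboundary_hbar3_Xi.
- exact: Xi_pm_t_commutator_hbar3.
Qed.
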